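(* Assume $|\Theta|>1$ and let $D^{ST}$ be any constant with $d^{\mathcal T}(\theta,\theta^{\mathcal T}_* )\le d^{\mathcal S}(\theta,\theta^{\mathcal S}_* )+D^{ST}$ for all $\theta\in\Theta$. With $\hat\theta\in\arg\min_{\theta}\min_M\widehat{\mathcal R}^{\mathcal S}_{\theta,M}$ and $\Delta\mathcal R^{\mathcal S\to\mathcal T}=\mathcal R^{\mathcal T}_{\hat\theta,\widehat M^{\mathcal T}_{\hat\theta}}-\min_\theta\mathcal R^{\mathcal T}_\theta$, for every realization of the data sets, $$\Delta\mathcal R^{\mathcal S\to\mathcal T}\le2\mathcal G^{\mathcal T}_{\hat\theta}(\mathcal D^{\mathcal T})+d^{\mathcal S}(\hat\theta,\theta^{\mathcal S}_* )+D^{ST}\le2\mathcal G^{\mathcal T}_{\hat\theta}(\mathcal D^{\mathcal T})+\sup_{\theta\in\Theta}\mathcal G^{\mathcal S}_\theta(\mathcal D^{\mathcal S})+\mathcal G^{\mathcal S}_{\theta^{\mathcal S}_*}(\mathcal D^{\mathcal S})+D^{ST}.$$ If instead $\Theta=\{\theta\}$ is a singleton, then $\Delta\mathcal R^{\mathcal S\to\mathcal T}\le2\mathcal G^{\mathcal T}_\theta(\mathcal D^{\mathcal T})$.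
   Context: $\mathcal X$ finite, labels $c\in\{0,1\}$, $\Theta$ arbitrary, $\rho_\theta(x)$ density matrices on $\mathbb C^n$, $\mathcal M$ the binary POVMs $M=(M_0,M_1)$, $M_c\succeq0$, $M_0+M_1=I$; loss $\ell_{\theta,M}(c,x)=1-\mathrm{Tr}(M_c\rho_\theta(x))$. For task $\mathcal A\in\{\mathcal S,\mathcal T\}$ with distribution $p^{\mathcal A}(c,x)$ and finite data set $\mathcal D^{\mathcal A}$ of $N^{\mathcal A}$ samples: $\mathcal R^{\mathcal A}_{\theta,M}=\mathbb E_{p^{\mathcal A}}[\ell_{\theta,M}]$, $\mathcal R^{\mathcal A}_\theta=\min_M\mathcal R^{\mathcal A}_{\theta,M}$, $\widehat{\mathcal R}^{\mathcal A}_{\theta,M}=\frac1{N^{\mathcal A}}\sum_{(c,x)\in\mathcal D^{\mathcal A}}\ell_{\theta,M}(c,x)$, $\widehat M^{\mathcal A}_\theta\in\arg\min_M\widehat{\mathcal R}^{\mathcal A}_{\theta,M}$, $\theta^{\mathcal A}_*\in\arg\min_\theta\mathcal R^{\mathcal A}_\theta$ (minimizers assumed to exist). Task distance $d^{\mathcal A}(\theta,\theta')=|\mathcal R^{\mathcal A}_{\theta'}-\mathcal R^{\mathcal A}_\theta|$. Generalization error $\mathcal G^{\mathcal A}_\theta(\mathcal D^{\mathcal A})=\sup_{M\in\mathcal M}|\mathcal R^{\mathcal A}_{\theta,M}-\widehat{\mathcal R}^{\mathcal A}_{\theta,M}|$. *)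

From HB Require Import structures.
From mathcomp Require Import all_boot all_order all_algebra.
From mathcomp Require Import complex.
From mathcomp Require Import classical_sets reals.

Set Implicit Arguments.
Unset Strict Implicit.
Unset Printing Implicit Defensive.

Import Order.TTheory GRing.Theory Num.Theory Num.Def.
Local Open Scope ring_scope.
Local Open Scope classical_set_scope.

Section QML.
Variables (R : realType) (n : nat).

Definition psdmx (A : 'M[R[i]]_n) : Prop :=
  A \is hermsymmx /\
  forall v : 'rV[R[i]]_n, 0 <= (v *m A *m (map_mx conjC v)^T) ord0 ord0.

Definition density (A : 'M[R[i]]_n) : Prop := psdmx A /\ \tr A = 1.

Definition povm (M : 'I_2 -> 'M[R[i]]_n) : Prop :=
  (forall c, psdmx (M c)) /\ M ord0 + M (@Ordinal 2 1 isT) = 1%:M.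

Variables (X : finType) (Theta : Type) (rho : Theta -> X -> 'M[R[i]]_n).

Definition loss (th : Theta) (M : 'I_2 -> 'M[R[i]]_n) (c : 'I_2) (x : X) : R :=
  1 - complex.Re (\tr (M c *m rho th x)).

Definition is_distr (p : 'I_2 -> X -> R) : Prop :=
  (forall c x, 0 <= p c x) /\ \sum_(c : 'I_2) \sum_(x : X) p c x = 1.

Definition risk (p : 'I_2 -> X -> R) (th : Theta) (M : 'I_2 -> 'M[R[i]]_n) : R :=
  \sum_(c : 'I_2) \sum_(x : X) p c x * loss th M c x.

(* R_theta = min_M R_{theta,M} (the minimum exists, so it is the infimum) *)
Definition riskmin (p : 'I_2 -> X -> R) (th : Theta) : R :=
  inf [set risk p th M | M in povm].

Definition emprisk (D : seq ('I_2 * X)) (th : Theta) (M : 'I_2 -> 'M[R[i]]_n) : R :=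
  (size D)%:R^-1 * \sum_(s <- D) loss th M s.1 s.2.

Definition empriskmin (D : seq ('I_2 * X)) (th : Theta) : R :=
  inf [set emprisk D th M | M in povm].

Definition taskdist (p : 'I_2 -> X -> R) (th th' : Theta) : R :=
  `|riskmin p th' - riskmin p th|.

Definition generr (p : 'I_2 -> X -> R) (D : seq ('I_2 * X)) (th : Theta) : R :=
  sup [set `|risk p th M - emprisk D th M| | M in povm].

End QML.

From HB Require Import structures.
From mathcomp Require Import all_boot all_order all_algebra.
From mathcomp Require Import complex.
From mathcomp Require Import classical_sets reals.
From mathcomp Require Import ring lra.
Import Order.TTheory GRing.Theory Num.Theory Num.Def.
Local Open Scope ring_scope.
Local Open Scope classical_set_scope.

Set Implicit Arguments.
Unset Strict Implicit.

(* The argument itself is elementary: for every theta and every POVM M,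
   |R_{theta,M} - hat R_{theta,M}| <= G_theta(D), which gives
   (i)  R_{theta, hat M} <= R_theta + 2 G_theta(D) when hat M minimizes the
        empirical risk (standard ERM excess-risk bound), and
   (ii) |R_theta - min_M hat R_{theta,M}| <= G_theta(D).
   The first claim is (i) at hat theta plus the hypothesis d^T <= d^S + D^{ST};
   the second bounds d^S(hat theta, theta^S_* ) by (ii) at hat theta and at
   theta^S_*, together with the minimality of hat theta for the empirical risk.

   The only technical point is that R_theta and G_theta(D) are defined as an
   infimum and a supremum over all POVMs, and these behave as expected only
   for bounded families. *)

Section QuadraticForms.
Variables (C : numClosedFieldType) (n : nat).
Local Notation e i := (delta_mx (0 : 'I_1) i : 'rV[C]_n).

Lemma form_delta (A : 'M[C]_n) i j : (e i *m A *m (e j)^T) 0 0 = A i j.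
Proof. by rewrite trmx_delta -rowE -colE !mxE. Qed.

Lemma conj_delta i : map_mx conjC (e i) = e i.
Proof. by apply/matrixP => k l; rewrite !mxE rmorph_nat. Qed.

Lemma qform_span2 (A : 'M[C]_n) i j a b :
  ((a *: e i + b *: e j) *m A *m (map_mx conjC (a *: e i + b *: e j))^T) 0 0 =
  a * a^* * A i i + a * b^* * A i j + b * a^* * A j i + b * b^* * A j j.
Proof.
rewrite map_mxD !map_mxZ !conj_delta linearD /= !linearZ /=.
rewrite !mulmxDl !mulmxDr -!scalemxAl -!scalemxAr !scalerA !(form_delta, mxE).
ring.
Qed.

End QuadraticForms.

Section PsdEntries.
Variables (R : realType) (n : nat).

(* A nonnegative 2x2 Hermitian-type form has off-diagonal real and imaginary
   parts bounded by its trace; tested on (1,0), (0,1), (1,+-1), (1,+-i). *)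
Lemma form2_bounds (z11 z12 z21 z22 : R[i]) :
  (forall a b, 0 <= a * a^* * z11 + a * b^* * z12 + b * a^* * z21 + b * b^* * z22) ->
  [/\ `|complex.Re z12| <= complex.Re z11 + complex.Re z22,
      `|complex.Im z12| <= complex.Re z11 + complex.Re z22 &
      0 <= complex.Re z11].
Proof.
move=> pos.
move: (pos 1 0) (pos 0 1) (pos 1 1) (pos 1 (-1)) (pos 1 'i%C) (pos 1 (-'i%C)).
clear pos.
case: z11 => x1 y1; case: z12 => x2 y2; case: z21 => x3 y3; case: z22 => x4 y4.
rewrite !lecE /=; simpc.
move=> /andP[/eqP ? ?] /andP[/eqP ? ?] /andP[/eqP ? ?] /andP[/eqP ? ?]
       /andP[/eqP ? ?] /andP[/eqP ? ?].
split; rewrite ?ler_norml; try apply/andP; try split; lra.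
Qed.

Lemma psd_entry_bounds (A : 'M[R[i]]_n) : psdmx A -> forall i j,
  [/\ `|complex.Re (A i j)| <= complex.Re (A i i) + complex.Re (A j j),
      `|complex.Im (A i j)| <= complex.Re (A i i) + complex.Re (A j j) &
      0 <= complex.Re (A i i)].
Proof.
move=> [_ posA] i j; apply: (@form2_bounds _ _ (A j i)) => a b.
by rewrite -qform_span2; apply: posA.
Qed.

Lemma psd_diag_ge0 (A : 'M[R[i]]_n) k : psdmx A -> 0 <= complex.Re (A k k).
Proof. by move=> psdA; have [] := psd_entry_bounds psdA k k. Qed.

Lemma psd_entry_le2 (A : 'M[R[i]]_n) : psdmx A ->
  (forall k, complex.Re (A k k) <= 1) ->
  forall i j, `|complex.Re (A i j)| <= 2 /\ `|complex.Im (A i j)| <= 2.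
Proof.
move=> psdA diag1 i j; have [hRe hIm _] := psd_entry_bounds psdA i j.
by move: (diag1 i) (diag1 j); split; lra.
Qed.

Lemma Re_add (x y : R[i]) : complex.Re (x + y) = complex.Re x + complex.Re y.
Proof. by case: x; case: y. Qed.

Lemma Re_mul (x y : R[i]) :
  complex.Re (x * y) = complex.Re x * complex.Re y - complex.Im x * complex.Im y.
Proof. by case: x => ? ?; case: y => ? ?; simpc. Qed.

Lemma Re_sum (I : Type) (r : seq I) (P : pred I) (F : I -> R[i]) :
  complex.Re (\sum_(i <- r | P i) F i) = \sum_(i <- r | P i) complex.Re (F i).
Proof. exact: (big_morph _ Re_add). Qed.

Lemma density_diag_le1 (A : 'M[R[i]]_n) k : density A -> complex.Re (A k k) <= 1.
Proof.
move=> [psdA trA]; have : complex.Re (\tr A) = 1 by rewrite trA.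
rewrite /mxtrace Re_sum (bigD1 k) //=.
have : 0 <= \sum_(i < n | i != k) complex.Re (A i i).
  by apply: sumr_ge0 => i _; apply: psd_diag_ge0.
lra.
Qed.

(* Each effect M_c of a POVM has diagonal at most 1, since M_0 + M_1 = I. *)
Lemma povm_diag_le1 (M : 'I_2 -> 'M[R[i]]_n) c k :
  povm M -> complex.Re (M c k k) <= 1.
Proof.
move=> [psdM sumM].
have : complex.Re ((M ord0 + M (@Ordinal 2 1 isT)) k k) = 1.
  by rewrite sumM mxE eqxx.
rewrite mxE Re_add.
move: (psd_diag_ge0 k (psdM ord0)) (psd_diag_ge0 k (psdM (@Ordinal 2 1 isT))).
case: c => -[|[|//]] hc.
- have -> : Ordinal hc = ord0 by apply: val_inj.
  lra.
- have -> : Ordinal hc = Ordinal (isT : 1 < 2)%N by apply: val_inj.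
  lra.
Qed.

End PsdEntries.

Section TraceBound.
Variables (R : realType) (n : nat).

(* |Re Tr(A B)| <= 8 n^2 for PSD A, B whose diagonals are at most 1, since
   every entry of A and B has real and imaginary part within 2. *)
Lemma trace_product_bounded (A B : 'M[R[i]]_n) :
  psdmx A -> (forall k, complex.Re (A k k) <= 1) ->
  psdmx B -> (forall k, complex.Re (B k k) <= 1) ->
  `|complex.Re (\tr (A *m B))| <= 8 *+ (n * n).
Proof.
move=> psdA diagA psdB diagB.
rewrite /mxtrace Re_sum; apply: le_trans (ler_norm_sum _ _ _) _.
apply: (@le_trans _ _ (\sum_(k < n) \sum_(l < n) (8 : R))); last first.
  by rewrite !sumr_const card_ord -mulrnA.
apply: ler_sum => k _; rewrite mxE Re_sum; apply: le_trans (ler_norm_sum _ _ _) _.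
apply: ler_sum => l _; rewrite Re_mul; apply: le_trans (ler_normB _ _) _.
have [ReA ImA] := psd_entry_le2 psdA diagA k l.
have [ReB ImB] := psd_entry_le2 psdB diagB l k.
rewrite !normrM.
have : `|complex.Re (A k l)| * `|complex.Re (B l k)| <= 2 * 2 by apply: ler_pM.
have : `|complex.Im (A k l)| * `|complex.Im (B l k)| <= 2 * 2 by apply: ler_pM.
lra.
Qed.

End TraceBound.

(* An average of values bounded by B is bounded by B (the empty average is 0). *)
Lemma mean_bounded (R : realFieldType) (T : Type) (D : seq T) (F : T -> R) (B : R) :
  0 <= B -> (forall s, `|F s| <= B) -> `|(size D)%:R^-1 * \sum_(s <- D) F s| <= B.
Proof.
move=> B_ge0 FB; have [->|D_neq0] := eqVneq (size D) 0%N.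
  by rewrite invr0 mul0r normr0.
have sumB : `|\sum_(s <- D) F s| <= B *+ size D.
  apply: le_trans (ler_norm_sum _ _ _) _.
  by rewrite -iter_addr_0 -(count_predT D) -big_const_seq; apply: ler_sum.
rewrite normrM ger0_norm ?invr_ge0 ?ler0n // ler_pdivrMl ?ltr0n ?lt0n //.
by rewrite mulrC mulr_natr.
Qed.

Section PovmExtrema.
Variables (R : realType) (n : nat).

(* The trivial POVM (I, 0) witnesses that the set of POVMs is nonempty. *)
Definition trivial_povm : 'I_2 -> 'M[R[i]]_n :=
  fun c => if c == ord0 then 1%:M else 0.

Lemma trivial_povmP : povm trivial_povm.
Proof.
split; last by rewrite /trivial_povm /= addr0.
move=> c; rewrite /trivial_povm; case: (c == ord0).
- split; first exact: hermitian1mx_subproof.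
  move=> v; rewrite mulmx1 !mxE; apply: sumr_ge0 => k _; rewrite !mxE.
  exact: mul_conjC_ge0.
- split.
    by rewrite qualifE; apply/eqP/matrixP => k l; rewrite !mxE rmorph0 mulr0.
  by move=> v; rewrite mulmx0 mul0mx mxE.
Qed.

Local Notation over_povm f := [set f M | M in @povm R n].

Lemma over_povm_neq0 (f : ('I_2 -> 'M[R[i]]_n) -> R) : over_povm f !=set0.
Proof. by exists (f trivial_povm), trivial_povm => //; apply: trivial_povmP. Qed.

Lemma inf_povm_le (f : ('I_2 -> 'M[R[i]]_n) -> R) (B : R) M :
  (forall M', povm M' -> B <= f M') -> povm M -> inf (over_povm f) <= f M.
Proof.
move=> fB povmM; apply: ge_inf; last by exists M.
by exists B => _ [M' povmM' <-]; apply: fB.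
Qed.

Lemma le_inf_povm (f : ('I_2 -> 'M[R[i]]_n) -> R) x :
  (forall M, povm M -> x <= f M) -> x <= inf (over_povm f).
Proof.
by move=> xf; apply: lb_le_inf (over_povm_neq0 f) _ => _ [M povmM <-]; apply: xf.
Qed.

Lemma le_sup_povm (f : ('I_2 -> 'M[R[i]]_n) -> R) (B : R) M :
  (forall M', povm M' -> f M' <= B) -> povm M -> f M <= sup (over_povm f).
Proof.
move=> fB povmM; apply: ub_le_sup; last by exists M.
by exists B => _ [M' povmM' <-]; apply: fB.
Qed.

Lemma sup_povm_le (f : ('I_2 -> 'M[R[i]]_n) -> R) (B : R) :
  (forall M, povm M -> f M <= B) -> sup (over_povm f) <= B.
Proof.
by move=> fB; apply: ge_sup (over_povm_neq0 f) _ => _ [M povmM <-]; apply: fB.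
Qed.

End PovmExtrema.

Section Risks.
Variables (R : realType) (n : nat) (X : finType) (Theta : Type)
  (rho : Theta -> X -> 'M[R[i]]_n).
Hypothesis rho_density : forall th x, density (rho th x).

Definition lossmax : R := 1 + 8 *+ (n * n).

Lemma lossmax_ge0 : 0 <= lossmax.
Proof. by rewrite addr_ge0 // mulrn_wge0. Qed.

Lemma loss_bounded th M c x : povm M -> `|loss rho th M c x| <= lossmax.
Proof.
move=> povmM; rewrite /loss; apply: le_trans (ler_normB _ _) _.
rewrite normr1 lerD2l; have [[psdM _] [psd_rho _]] := (povmM, rho_density th x).
apply: trace_product_bounded => // k.
- exact: povm_diag_le1.
- exact: density_diag_le1.
Qed.

Lemma risk_bounded p th M : is_distr p -> povm M -> `|risk rho p th M| <= lossmax.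
Proof.
move=> [p_ge0 p_sum1] povmM; rewrite /risk.
apply: le_trans (ler_norm_sum _ _ _) _.
apply: (@le_trans _ _ (\sum_(c : 'I_2) \sum_(x : X) p c x * lossmax)).
  apply: ler_sum => c _; apply: le_trans (ler_norm_sum _ _ _) _.
  apply: ler_sum => x _; rewrite normrM ger0_norm //.
  by apply: ler_wpM2l => //; apply: loss_bounded.
have -> : \sum_(c : 'I_2) \sum_(x : X) p c x * lossmax
          = (\sum_(c : 'I_2) \sum_(x : X) p c x) * lossmax.
  by rewrite mulr_suml; apply: eq_bigr => c _; rewrite mulr_suml.
by rewrite p_sum1 mul1r.
Qed.

Lemma emprisk_bounded D th M : povm M -> `|emprisk rho D th M| <= lossmax.
Proof.
by move=> povmM; apply: mean_bounded lossmax_ge0 _ => s; apply: loss_bounded.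
Qed.

Lemma deviation_le_generr p D th M : is_distr p -> povm M ->
  `|risk rho p th M - emprisk rho D th M| <= generr rho p D th.
Proof.
move=> distr_p; apply: (le_sup_povm (B := lossmax + lossmax)) => M' povmM'.
apply: le_trans (ler_normB _ _) _.
by apply: lerD; [apply: risk_bounded | apply: emprisk_bounded].
Qed.

Lemma generr_bounded p D th : is_distr p -> generr rho p D th <= lossmax + lossmax.
Proof.
move=> distr_p; apply: sup_povm_le => M povmM.
apply: le_trans (ler_normB _ _) _.
by apply: lerD; [apply: risk_bounded | apply: emprisk_bounded].
Qed.

Lemma riskmin_le p th M : is_distr p -> povm M -> riskmin rho p th <= risk rho p th M.
Proof.
move=> distr_p; apply: (inf_povm_le (B := - lossmax)) => M' povmM'.
by move: (risk_bounded th distr_p povmM'); rewrite ler_norml => /andP[].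
Qed.

Lemma empriskmin_le D th M : povm M -> empriskmin rho D th <= emprisk rho D th M.
Proof.
apply: (inf_povm_le (B := - lossmax)) => M' povmM'.
by move: (emprisk_bounded D th povmM'); rewrite ler_norml => /andP[].
Qed.

Lemma risk_emprisk_close p D th M : is_distr p -> povm M ->
  risk rho p th M <= emprisk rho D th M + generr rho p D th /\
  emprisk rho D th M <= risk rho p th M + generr rho p D th.
Proof.
move=> distr_p povmM; have := deviation_le_generr D th distr_p povmM.
by rewrite ler_norml => /andP[? ?]; split; lra.
Qed.

Lemma erm_excess_risk p D th Mhat : is_distr p -> povm Mhat ->
  (forall M, povm M -> emprisk rho D th Mhat <= emprisk rho D th M) ->
  risk rho p th Mhat <= riskmin rho p th + 2 * generr rho p D th.
Proof.
move=> distr_p povmMhat Mhat_min; rewrite -lerBlDr; apply: le_inf_povm => M povmM.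
have [Mhat_le _] := risk_emprisk_close D th distr_p povmMhat.
have [_ emp_le] := risk_emprisk_close D th distr_p povmM.
by move: (Mhat_min M povmM); lra.
Qed.

Lemma riskmin_le_empriskmin p D th : is_distr p ->
  riskmin rho p th <= empriskmin rho D th + generr rho p D th.
Proof.
move=> distr_p; rewrite -lerBlDr; apply: le_inf_povm => M povmM.
have [risk_le _] := risk_emprisk_close D th distr_p povmM.
by move: (riskmin_le th distr_p povmM); lra.
Qed.

Lemma empriskmin_le_riskmin p D th : is_distr p ->
  empriskmin rho D th <= riskmin rho p th + generr rho p D th.
Proof.
move=> distr_p; rewrite -lerBlDr; apply: le_inf_povm => M povmM.
have [_ emp_le] := risk_emprisk_close D th distr_p povmM.
by move: (empriskmin_le D th povmM); lra.
Qed.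

Lemma taskdist_to_minimizer p th th0 :
  (forall th', riskmin rho p th0 <= riskmin rho p th') ->
  taskdist rho p th th0 = riskmin rho p th - riskmin rho p th0.
Proof.
by move=> th0_min; rewrite /taskdist ler0_norm ?opprB // subr_le0.
Qed.

Lemma erm_taskdist_bound p D thstar thhat : is_distr p ->
  (forall th, riskmin rho p thstar <= riskmin rho p th) ->
  (forall th, empriskmin rho D thhat <= empriskmin rho D th) ->
  taskdist rho p thhat thstar <= generr rho p D thhat + generr rho p D thstar.
Proof.
move=> distr_p thstar_min thhat_min; rewrite taskdist_to_minimizer //.
rewrite lerBlDr (le_trans (riskmin_le_empriskmin D thhat distr_p)) //.
rewrite [_ + generr _ _ _ thhat]addrC -addrA lerD2l addrC.
exact: le_trans (thhat_min thstar) (empriskmin_le_riskmin D thstar distr_p).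
Qed.

(* Generalization errors are uniformly bounded, so each lies below their sup. *)
Lemma generr_le_sup p D th : is_distr p ->
  generr rho p D th <= sup [set generr rho p D th' | th' in [set: Theta]].
Proof.
move=> distr_p; apply: ub_le_sup; last by exists th.
exists (lossmax + lossmax) => _ [th' _ <-].
exact: generr_bounded.
Qed.

End Risks.

Theorem lemmaB1 (R : realType) (n : nat) (X : finType) (Theta : Type)
  (rho : Theta -> X -> 'M[R[i]]_n)
  (pS pT : 'I_2 -> X -> R) (DS DT : seq ('I_2 * X))
  (thS thT thhat : Theta) (MhatT : 'I_2 -> 'M[R[i]]_n) :
  (forall th x, density (rho th x)) ->
  is_distr pS -> is_distr pT ->
  (* theta^S_* and theta^T_* minimize R^S_theta and R^T_theta *)
  (forall th, riskmin rho pS thS <= riskmin rho pS th) ->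
  (forall th, riskmin rho pT thT <= riskmin rho pT th) ->
  (* hat theta minimizes min_M hat R^S_{theta,M} *)
  (forall th, empriskmin rho DS thhat <= empriskmin rho DS th) ->
  (* MhatT = hat M^T_{hat theta} minimizes hat R^T_{hat theta, M} over POVMs *)
  povm MhatT ->
  (forall M, povm M -> emprisk rho DT thhat MhatT <= emprisk rho DT thhat M) ->
  let DeltaR := risk rho pT thhat MhatT - riskmin rho pT thT in
  ((exists th1 th2 : Theta, th1 <> th2) ->
   forall DST : R,
   (forall th, taskdist rho pT th thT <= taskdist rho pS th thS + DST) ->
   DeltaR <= 2 * generr rho pT DT thhat + taskdist rho pS thhat thS + DST /\
   2 * generr rho pT DT thhat + taskdist rho pS thhat thS + DST
     <= 2 * generr rho pT DT thhat
        + sup [set generr rho pS DS th | th in [set: Theta]]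
        + generr rho pS DS thS + DST)
  /\
  (forall th0 : Theta, (forall th, th = th0) ->
   DeltaR <= 2 * generr rho pT DT th0).
Proof.
move=> rho_density distr_S distr_T thS_min thT_min thhat_min povm_MhatT MhatT_min.
have excess := erm_excess_risk rho_density distr_T povm_MhatT MhatT_min.
split.
- move=> _ DST dT_le_dS; split.
  + have dT : riskmin rho pT thhat - riskmin rho pT thT
              <= taskdist rho pS thhat thS + DST.
      by rewrite -taskdist_to_minimizer //; apply: dT_le_dS.
    rewrite -addrA; apply: le_trans (lerB excess (lexx _)) _.
    by rewrite addrAC addrC lerD2l.
  + rewrite lerD2r -addrA lerD2l.
    apply: le_trans (erm_taskdist_bound rho_density distr_S thS_min thhat_min) _.
    by rewrite lerD2r generr_le_sup.
- move=> th0 all_th0; move: excess.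
  by rewrite (all_th0 thT) (all_th0 thhat) -lerBlDl.
Qed.
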